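(* Let $F$ be a maximal triangle-free graph and let $G$ be a triangle-free graph having the $F$-twin property. Let $H$ be a subgraph of $G$ isomorphic to $F$, let $z\in V(H)$ and let $z'\in V(G)\setminus V(H)$ be an $H$-twin of $z$, and set $H'=H(z')$. If a vertex $q'\in V(G)$ is an $H'$-twin of some $q\in V(H)\setminus\{z\}$, then $q'$ is also an $H$-twin of $q$.
   Context: $\mathrm N(v)$ denotes the neighbourhood of $v$ in $G$. For a subgraph $H$ of $G$, $q\in V(H)$ and $q'\in V(G)$, $q'$ is an $H$-twin of $q$ if $\mathrm N(q)\cap V(H)=\mathrm N(q')\cap V(H)$. For $q'\notin V(H)$ an $H$-twin of $q\in V(H)$, $H(q')$ denotes the graph obtained from $H$ by deleting $q$ and adding $q'$ together with all edges of $G$ between $q'$ and $V(H)\setminus\{q\}$ (this graph is isomorphic to $H$). For graphs $F,G$ and $e\in E(F)$, $G$ has the $(F,e)$-twin property if whenever $H\subseteq G$ is a subgraph isomorphic to $F$, $qz\in E(H)$ corresponds to $e$ under some isomorphism, and $q',z'\in V(G)$ are $H$-twins of $q,z$ respectively, then $q'z'\in E(G)$. $G$ has the $F$-twin property if it has the $(F,e)$-twin property for every $e\in E(F)$. A graph is maximal triangle-free if it contains no triangle but adding any new edge creates a triangle. *)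

From mathcomp Require Import all_boot.
Set Implicit Arguments. Unset Strict Implicit. Unset Printing Implicit Defensive.

(* A simple graph: vertex type T : finType, adjacency e : rel T,
   symmetric and irreflexive (these are hypotheses of the theorem). *)

Definition triangle_free (T : finType) (e : rel T) : Prop :=
  ~ (exists x y w : T, [&& e x y, e y w & e x w]).

Definition maximal_triangle_free (T : finType) (e : rel T) : Prop :=
  triangle_free e /\
  (forall x y : T, x != y -> ~~ e x y -> exists w : T, e x w && e y w).

(* A subgraph H of G isomorphic to F, together with an isomorphism,
   is given by an injective edge-preserving map phi : V(F) -> V(G);
   H is then the image of F under phi (vertex set phi @: setT,
   edges phi(a)phi(b) for ab in E(F)). *)
Definition is_copy (TF TG : finType) (eF : rel TF) (eG : rel TG)
  (phi : TF -> TG) : Prop :=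
  injective phi /\ (forall a b : TF, eF a b -> eG (phi a) (phi b)).

Definition copy_vertices (TF TG : finType) (phi : TF -> TG) : {set TG} :=
  [set phi a | a : TF].

Definition is_twin (TG : finType) (eG : rel TG) (VH : {set TG}) (q q' : TG)
  : Prop :=
  q \in VH /\ (forall v : TG, v \in VH -> eG q v = eG q' v).

Definition swap_vertices (TG : finType) (VH : {set TG}) (q q' : TG)
  : {set TG} := q' |: (VH :\ q).

Definition F_twin_property (TF TG : finType) (eF : rel TF) (eG : rel TG)
  : Prop :=
  forall phi : TF -> TG, is_copy eF eG phi ->
  forall a b : TF, eF a b ->
  forall q' z' : TG,
    is_twin eG (copy_vertices phi) (phi a) q' ->
    is_twin eG (copy_vertices phi) (phi b) z' ->
    eG q' z'.

From mathcomp Require Import all_boot.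

(* Write H = phi(F), z = phi b and q = phi a.  Outside z, the neighbourhoods
   of q and q' agree on V(H) because those vertices also lie in V(H').  At z,
   since F is maximal triangle-free and G triangle-free, H is an induced copy,
   so q z is an edge exactly when a b is an edge of F.  If it is, H' is the
   copy phi' = phi[b := z'] of F, in which z is an H'-twin of z' = phi' b and
   q' an H'-twin of q = phi' a, so the twin property gives q' z.  If it is not, a and b have a common
   neighbour w in F, q' is adjacent to phi w, and an edge q' z would close the
   triangle q' z (phi w). *)

Set Implicit Arguments.
Unset Strict Implicit.
Unset Printing Implicit Defensive.

Definition swap_map (TF TG : finType) (phi : TF -> TG) (b : TF) (z' : TG)
  : TF -> TG := fun x => if x == b then z' else phi x.

Lemma mem_swap_vertices (TG : finType) (VH : {set TG}) (q q' v : TG) :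
  v \in VH -> v != q -> v \in swap_vertices VH q q'.
Proof. by move=> vV vq; rewrite !inE vq vV orbT. Qed.

Lemma copy_vertices_swap_map (TF TG : finType) (phi : TF -> TG) b z' :
  injective phi ->
  copy_vertices (swap_map phi b z') = swap_vertices (copy_vertices phi) (phi b) z'.
Proof.
move=> injphi; apply/setP => u; rewrite !inE; apply/imsetP/idP.
- move=> [x _ ->]; rewrite /swap_map; case: (eqVneq x b) => [_|nxb]; first by rewrite eqxx.
  by rewrite (inj_eq injphi) nxb imset_f ?orbT.
- case/orP => [/eqP ->|/andP [nub /imsetP [x _ Eu]]]; first by exists b; rewrite // /swap_map eqxx.
  by exists x; rewrite // /swap_map ifN //; apply: contraNneq nub => <-; rewrite Eu.
Qed.

Section SwapTwin.

Variables (TF TG : finType) (eF : rel TF) (eG : rel TG).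
Hypotheses (irrF : irreflexive eF) (symG : symmetric eG) (irrG : irreflexive eG).
Hypotheses (maxF : maximal_triangle_free eF) (tfG : triangle_free eG).
Hypothesis twG : F_twin_property eF eG.

Lemma twin_swap_vertices (VH : {set TG}) (z z' : TG) :
  is_twin eG VH z z' -> is_twin eG (swap_vertices VH z z') z' z.
Proof.
move=> [zV tzz]; split; first by rewrite !inE eqxx.
have zz' : eG z z' = false by rewrite symG -tzz // irrG.
by move=> u; rewrite !inE => /orP [/eqP ->|/andP [_ uV]]; rewrite ?irrG ?zz' ?tzz.
Qed.

Variable phi : TF -> TG.
Hypothesis copy_phi : is_copy eF eG phi.

Let V := copy_vertices phi.

Lemma copy_induced a b : eG (phi a) (phi b) = eF a b.
Proof.
move: copy_phi maxF => [_ edphi] [_ maxF'].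
apply/idP/idP => [Eab|]; last exact: edphi.
case: (eqVneq a b) Eab => [<- Eaa|nab Eab].
  by case: tfG; exists (phi a), (phi a), (phi a); rewrite Eaa.
apply/negPn/negP => nF; have [w /andP [aw bw]] := maxF' a b nab nF.
by case: tfG; exists (phi a), (phi b), (phi w); rewrite Eab !edphi.
Qed.

Lemma swap_map_copy b z' :
  z' \notin V -> is_twin eG V (phi b) z' -> is_copy eF eG (swap_map phi b z').
Proof.
move: copy_phi => [injphi edphi] z'V [_ tbz'].
have z'_fresh w : phi w != z' by apply: contraNneq z'V => <-; apply: imset_f.
split=> [x y|x y exy]; rewrite /swap_map.
- case: (eqVneq x b) => [->|_]; case: (eqVneq y b) => [->|_] // E.
  + by move: (z'_fresh y); rewrite E eqxx.
  + by move: (z'_fresh x); rewrite E eqxx.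
  + exact: injphi.
- case: (eqVneq x b) => [Exb|_]; case: (eqVneq y b) => [Eyb|_]; subst.
  + by rewrite irrF in exy.
  + by rewrite -tbz' ?edphi ?imset_f.
  + by rewrite symG -tbz' ?imset_f // symG edphi.
  + exact: edphi.
Qed.

Lemma swap_twin_edge (a b : TF) (z' q' : TG) :
  z' \notin V -> is_twin eG V (phi b) z' ->
  eF a b -> is_twin eG (swap_vertices V (phi b) z') (phi a) q' ->
  eG q' (phi b).
Proof.
move=> z'V tbz' Fab taq'.
have swap_a : swap_map phi b z' a = phi a.
  by rewrite /swap_map; case: eqVneq Fab => // ->; rewrite irrF.
have swap_b : swap_map phi b z' b = z' by rewrite /swap_map eqxx.
have [injphi _] := copy_phi.
apply: (twG (swap_map_copy z'V tbz') Fab);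
  rewrite copy_vertices_swap_map // ?swap_a ?swap_b //.
exact: twin_swap_vertices.
Qed.

Lemma swap_twin_nonedge (a b : TF) (z' q' : TG) :
  a != b -> ~~ eF a b -> is_twin eG (swap_vertices V (phi b) z') (phi a) q' ->
  ~~ eG q' (phi b).
Proof.
move: copy_phi maxF => [injphi edphi] [_ maxF'] nab nF [_ taq'].
have [w /andP [aw bw]] := maxF' a b nab nF.
have q'w : eG q' (phi w).
  rewrite -taq' ?edphi // mem_swap_vertices ?imset_f ?(inj_eq injphi) //.
  by apply: contraNneq nF => <-.
by apply/negP => q'b; case: tfG; exists q', (phi b), (phi w); rewrite q'b q'w edphi.
Qed.

End SwapTwin.

Theorem lemma2p3 (TF TG : finType) (eF : rel TF) (eG : rel TG)
  (symF : symmetric eF) (irrF : irreflexive eF)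
  (symG : symmetric eG) (irrG : irreflexive eG)
  (maxF : maximal_triangle_free eF)
  (tfG : triangle_free eG)
  (twG : F_twin_property eF eG)
  (phi : TF -> TG) (Hcopy : is_copy eF eG phi)
  (z z' : TG)
  (Hz : z \in copy_vertices phi)
  (Hz' : z' \notin copy_vertices phi)
  (Hzz' : is_twin eG (copy_vertices phi) z z')
  (q q' : TG)
  (Hq : q \in copy_vertices phi :\ z)
  (Hqq' : is_twin eG (swap_vertices (copy_vertices phi) z z') q q') :
  is_twin eG (copy_vertices phi) q q'.
Proof.
have [injphi _] := Hcopy.
move: Hq; rewrite !inE => /andP [qz qV].
move: Hz qV qz Hzz' Hqq' => /imsetP [b _ ->] /imsetP [a _ ->] qz tbz' taq'.
have nab : a != b by apply: contraNneq qz => ->.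
split=> [|_ /imsetP [c _ ->]]; first exact: imset_f.
case: (eqVneq c b) => [->|ncb]; last first.
  by case: taq' => _ ->; rewrite // mem_swap_vertices ?imset_f ?(inj_eq injphi).
rewrite (copy_induced maxF tfG Hcopy).
case: (boolP (eF a b)) => [Fab|nF].
- by rewrite (swap_twin_edge irrF symG irrG twG Hcopy Hz' tbz' Fab taq').
- by rewrite (negbTE (swap_twin_nonedge maxF tfG Hcopy nab nF taq')).
Qed.
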